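(* Let $\mathcal B=(B_1,\dots,B_d)$ be a splitting of order $d$ of $B_J\in\mathbb R^{n\times n}$. Then $1$ is an eigenvalue of $T(\mathcal B)$ if and only if $1$ is an eigenvalue of $B_J$. In particular, if $1$ is an eigenvalue of $B_J$ then the iteration $X^{(k+1)}=T(\mathcal B)X^{(k)}+\Gamma$ cannot be convergent for all initial data (since $\rho(T(\mathcal B))\ge1$).
   Context: For $B\in\mathbb R^{n\times n}$, a splitting of $B$ of order $d\ge1$ is an ordered $d$-tuple $\mathcal B=(B_1,\dots,B_d)$ of real $n\times n$ matrices with $B_p\neq O$ for all $p$, $\sum_{p=1}^d B_p=B$, and $B_p\circ B_q=O$ (Hadamard product) for $p\ne q$. The iteration matrix of $\mathcal B$ is the $dn\times dn$ matrix $T(\mathcal B)=(I_{dn}-\mathcal L)^{-1}\mathcal U$, where $\mathcal L,\mathcal U$ are $d\times d$ block matrices with $n\times n$ blocks, $\mathcal L_{ij}=B_j$ if $i>j$ and $O$ otherwise, $\mathcal U_{ij}=B_j$ if $i\le j$ and $O$ otherwise. *)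

From HB Require Import structures.
From mathcomp Require Import all_boot all_order all_algebra.
From mathcomp Require Import all_classical all_reals all_analysis.
Set Implicit Arguments. Unset Strict Implicit. Unset Printing Implicit Defensive.
Import Order.TTheory GRing.Theory Num.Theory.
Local Open Scope ring_scope.

(* Block indexing of 'I_(d * n): index i lies in block i %/ n, at inner position i %% n. *)
Lemma blk_proof d n (i : 'I_(d * n)) : (i %/ n < d)%N.
Proof.
case: n i => [|n] i; first by case: i => i; rewrite muln0.
by rewrite ltn_divLR // ltn_ord.
Qed.

Lemma inn_proof d n (i : 'I_(d * n)) : (i %% n < n)%N.
Proof.
case: n i => [|n] i; first by case: i => i; rewrite muln0.
by rewrite ltn_pmod.
Qed.

Definition blk d n (i : 'I_(d * n)) : 'I_d := Ordinal (blk_proof i).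
Definition inn d n (i : 'I_(d * n)) : 'I_n := Ordinal (inn_proof i).

Definition is_splitting (R : ringType) (n d : nat) (Bs : 'I_d -> 'M[R]_n)
    (B : 'M[R]_n) : Prop :=
  [/\ (0 < d)%N,
      forall p, Bs p != 0,
      \sum_(p < d) Bs p = B &
      forall p q, p != q -> forall i j, Bs p i j * Bs q i j = 0].

Definition splitL (R : ringType) (n d : nat) (Bs : 'I_d -> 'M[R]_n) : 'M[R]_(d * n) :=
  \matrix_(i, j) (if (blk j < blk i)%N then Bs (blk j) (inn i) (inn j) else 0).

Definition splitU (R : ringType) (n d : nat) (Bs : 'I_d -> 'M[R]_n) : 'M[R]_(d * n) :=
  \matrix_(i, j) (if (blk i <= blk j)%N then Bs (blk j) (inn i) (inn j) else 0).

Definition iterT (R : comUnitRingType) (n d : nat) (Bs : 'I_d -> 'M[R]_n) : 'M[R]_(d * n) :=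
  invmx (1%:M - splitL Bs) *m splitU Bs.

Definition iterates (R : ringType) (m : nat) (T : 'M[R]_m) (G X0 : 'cV[R]_m) (k : nat)
  : 'cV[R]_m := iter k (fun X => T *m X + G) X0.

(* The block structure of T = (I - L)^-1 U is irrelevant to the eigenvalue 1:
   v T = v iff v (L + U) = v.  Now L + U = E F, where E stacks d identity
   blocks and F = [B_1 ... B_d], while F E = B_1 + ... + B_d = B_J, and the
   nonzero eigenvalues of E F and F E coincide.  For the second claim, a
   nonzero x with T x = x shifts every iterate by x when added to X^(0), so
   two initial data cannot produce the same limit. *)

From HB Require Import structures.
From mathcomp Require Import all_boot all_order all_algebra.
From mathcomp Require Import all_classical all_reals all_analysis.
Import Order.TTheory GRing.Theory Num.Theory numFieldNormedType.Exports.
Local Open Scope classical_set_scope.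
Local Open Scope ring_scope.

Set Implicit Arguments.
Unset Strict Implicit.
Unset Printing Implicit Defensive.

Lemma blk_inn_ord_proof d n (p : 'I_d) (k : 'I_n) : (p * n + k < d * n)%N.
Proof.
apply: (@leq_trans (p * n + n)); first by rewrite ltn_add2l.
by rewrite -mulSnr leq_mul2r ltn_ord orbT.
Qed.

Definition blk_inn_ord d n (p : 'I_d) (k : 'I_n) : 'I_(d * n) :=
  Ordinal (blk_inn_ord_proof p k).

Lemma blk_inn_ordK d n p k : blk (@blk_inn_ord d n p k) = p.
Proof.
apply/val_inj => /=; have hk := ltn_ord k.
by rewrite divnMDl ?(leq_ltn_trans _ hk) // divn_small // addn0.
Qed.

Lemma inn_blk_inn_ord d n p k : inn (@blk_inn_ord d n p k) = k.
Proof. by apply/val_inj; rewrite /= modnMDl modn_small. Qed.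

Lemma blk_inn_ord_blk d n (i : 'I_(d * n)) : blk_inn_ord (blk i) (inn i) = i.
Proof. by apply/val_inj; rewrite /= -divn_eq. Qed.

Lemma big_blk_inn (V : nmodType) d n (F : 'I_(d * n) -> V) :
  \sum_i F i = \sum_(p < d) \sum_(k < n) F (blk_inn_ord p k).
Proof.
rewrite pair_big /= (reindex (fun pk : 'I_d * 'I_n => blk_inn_ord pk.1 pk.2)) //.
exists (fun i => (blk i, inn i)) => [[p k] _|i _] /=.
  by rewrite blk_inn_ordK inn_blk_inn_ord.
by rewrite blk_inn_ord_blk.
Qed.

Lemma ltn_blk d n (i j : 'I_(d * n)) : (blk j < blk i)%N -> (j < i)%N.
Proof. by apply: contraTT; rewrite -!leqNgt; apply: leq_div2r. Qed.

Section EigenvalueOne.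
Variable F : fieldType.

Lemma eigenvalue_trmx m (g : 'M[F]_m) a : eigenvalue g^T a = eigenvalue g a.
Proof.
rewrite /eigenvalue /eigenspace !kermx_eq0 !row_free_unit.
by rewrite -unitmx_tr linearB /= tr_scalar_mx trmxK.
Qed.

Lemma eigenvalue_mulmx_sub m n (A : 'M[F]_(m, n)) (B : 'M[F]_(n, m)) a :
  a != 0 -> eigenvalue (A *m B) a -> eigenvalue (B *m A) a.
Proof.
move=> a0 /eigenvalueP[v vAB v0]; apply/eigenvalueP; exists (v *m A).
  by rewrite mulmxA -(mulmxA v) vAB scalemxAl.
apply: contra v0 => /eqP vA0.
have : a *: v == 0 by rewrite -vAB mulmxA vA0 mul0mx.
by rewrite scaler_eq0 (negPf a0).
Qed.

Lemma eigenvalue_mulmxC m n (A : 'M[F]_(m, n)) (B : 'M[F]_(n, m)) a :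
  a != 0 -> eigenvalue (A *m B) a = eigenvalue (B *m A) a.
Proof. by move=> a0; apply/idP/idP; apply: eigenvalue_mulmx_sub. Qed.

Lemma eigenvalue1_mulVmx m (L U : 'M[F]_m) :
  1%:M - L \in unitmx ->
  eigenvalue (invmx (1%:M - L) *m U) 1 = eigenvalue (L + U) 1.
Proof.
move=> uA; rewrite eigenvalue_mulmxC ?oner_neq0 //.
have fixedE v : (v *m (U *m invmx (1%:M - L)) == v) = (v *m (L + U) == v).
  rewrite mulmxA -(inj_eq (can_inj (mulmxK uA))) mulmxKV //.
  by rewrite mulmxBr mulmx1 mulmxDr eq_sym subr_eq addrC eq_sym.
apply/eigenvalueP/eigenvalueP => -[v hv v0]; exists v; rewrite // scale1r;
  apply/eqP; move: hv; rewrite scale1r => /eqP.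
- by rewrite fixedE.
- by rewrite -fixedE.
Qed.

End EigenvalueOne.

Section Splitting.
Variables (R : fieldType) (n d : nat) (Bs : 'I_d -> 'M[R]_n).

Definition stack_id : 'M[R]_(d * n, n) := \matrix_(i, k) (inn i == k)%:R.

Definition split_row : 'M[R]_(n, d * n) := \matrix_(k, j) Bs (blk j) k (inn j).

Lemma splitLU_mul : splitL Bs + splitU Bs = stack_id *m split_row.
Proof.
apply/matrixP => i j; rewrite !mxE; under eq_bigr do rewrite !mxE.
rewrite (bigD1 (inn i)) //= eqxx mul1r big1 ?addr0 => [|k ki]; last first.
  by rewrite eq_sym (negPf ki) mul0r.
by case: ltnP; rewrite ?add0r ?addr0.
Qed.

Lemma split_row_mul_stack : split_row *m stack_id = \sum_(p < d) Bs p.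
Proof.
apply/matrixP => k l; rewrite !mxE summxE big_blk_inn; apply: eq_bigr => p _.
under eq_bigr do rewrite !mxE blk_inn_ordK inn_blk_inn_ord.
by rewrite (bigD1 l) //= eqxx mulr1 big1 ?addr0 // => k' /negPf->; rewrite mulr0.
Qed.

Lemma unitmx_1BsplitL : 1%:M - splitL Bs \in unitmx.
Proof.
rewrite unitmxE det_trig.
  by rewrite big1 ?unitr1 // => i _; rewrite !mxE eqxx ltnn subr0.
apply/is_trig_mxP => i j ij; rewrite !mxE -val_eqE /= (ltn_eqF ij) sub0r.
case: ifP => [/ltn_blk|]; last by rewrite oppr0.
by rewrite ltnNge (ltnW ij).
Qed.

Lemma eigenvalue1_iterT : eigenvalue (iterT Bs) 1 = eigenvalue (\sum_(p < d) Bs p) 1.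
Proof.
rewrite /iterT eigenvalue1_mulVmx ?unitmx_1BsplitL // splitLU_mul.
by rewrite eigenvalue_mulmxC ?oner_neq0 // split_row_mul_stack.
Qed.

End Splitting.

Lemma eigenvalue_colP (F : fieldType) m (g : 'M[F]_m) a :
  reflect (exists2 x : 'cV_m, g *m x = a *: x & x != 0) (eigenvalue g a).
Proof.
rewrite -eigenvalue_trmx; apply: (iffP eigenvalueP) => -[v hv v0]; exists v^T.
- by rewrite -[g]trmxK -trmx_mul hv linearZ.
- by rewrite trmx_eq0.
- by rewrite -trmx_mul hv linearZ.
- by rewrite trmx_eq0.
Qed.

Lemma iteratesD_fixed (R : ringType) m (T : 'M[R]_m) (G X0 x : 'cV[R]_m) k :
  T *m x = x -> iterates T G (X0 + x) k = iterates T G X0 k + x.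
Proof.
move=> Tx; elim: k => //= k IH.
by rewrite /iterates /= -/(iterates _ _ _ k) IH mulmxDr Tx addrAC.
Qed.

Lemma iterates_no_common_limit (R : realType) m (T : 'M[R]_m) (x : 'cV[R]_m) :
  T *m x = x -> x != 0 -> forall G : 'cV[R]_m,
    ~ exists Xs : 'cV[R]_m, forall (X0 : 'cV[R]_m) (i : 'I_m),
        (fun k => iterates T G X0 k i 0) @ \oo --> Xs i 0.
Proof.
move=> Tx x0 G [Xs cvgX].
have [i xi0] : exists i, x i 0 != 0.
  apply/existsP; apply: contraR x0 => /existsPn x0.
  by apply/eqP/matrixP => j k; rewrite (ord1 k) mxE; apply/eqP/negPn.
have cvg_shift : (fun k => iterates T G 0 k i 0 + x i 0) @ \oo --> Xs i 0.
  have := cvgX x i; rewrite -[x in iterates _ _ x]add0r.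
  by under eq_fun do rewrite iteratesD_fixed // mxE.
have cvg_sum : (fun k => iterates T G 0 k i 0 + x i 0) @ \oo --> Xs i 0 + x i 0.
  exact: cvgD (cvgX 0 i) (cvg_cst _).
have /eqP : Xs i 0 = Xs i 0 + x i 0 by apply: cvg_unique cvg_shift cvg_sum.
by rewrite eq_sym -subr_eq0 addrAC subrr add0r (negPf xi0).
Qed.

Theorem proposition2p4 (R : realType) (n d : nat) (Bs : 'I_d -> 'M[R]_n) (BJ : 'M[R]_n) :
  is_splitting Bs BJ ->
  (eigenvalue (iterT Bs) 1 <-> eigenvalue BJ 1) /\
  (eigenvalue BJ 1 ->
   forall G : 'cV[R]_(d * n),
     ~ exists Xs : 'cV[R]_(d * n),
         forall X0 : 'cV[R]_(d * n), forall i : 'I_(d * n),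
           (fun k => iterates (iterT Bs) G X0 k i 0) @ \oo --> Xs i 0).
Proof.
case=> _ _ sumB _; have eigT : eigenvalue (iterT Bs) 1 = eigenvalue BJ 1.
  by rewrite eigenvalue1_iterT sumB.
split; first by rewrite eigT.
rewrite -eigT => /eigenvalue_colP[x Tx x0].
by apply: iterates_no_common_limit x0; rewrite Tx scale1r.
Qed.
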